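(* Consider the linear system $x_{t+1}=Ax_t+Bu_t$ in closed loop with the LMPC policy defined for a prediction horizon $N$. Suppose the stage cost is $h(x,u)=x^\top Qx+u^\top Ru$ with $Q\succeq 0$, $R\succ 0$, that a feasible initial trajectory is given as described below, and that the LICQ condition described below holds. Assume that after $c$ iterations the closed-loop system converges to a fixed-point $(\boldsymbol{x}^\infty,\boldsymbol{u}^\infty)$, i.e. $\boldsymbol{x}^c=\boldsymbol{x}^{c+1}=\dots=\boldsymbol{x}^\infty$ and $\boldsymbol{u}^c=\boldsymbol{u}^{c+1}=\dots=\boldsymbol{u}^\infty$. Then, for all $t\geq 0$ and all $T>0$, the pair $(\boldsymbol{x}^\infty_{t:t+T},\boldsymbol{u}^\infty_{t:t+T-1})=([x_t^\infty,\ldots,x_{t+T}^\infty],[u_t^\infty,\ldots,u_{t+T-1}^\infty])$ is the optimizer of the finite-horizon optimal control problem $$P^*_{t\to t+T}(x_t^\infty,x_{t+T}^\infty)=\min_{u_0,\ldots,u_{T-1}}\sum_{k=0}^{T-1}h(x_k,u_k)$$ subject to $x_{k+1}=Ax_k+Bu_k$, $x_k\in\mathcal{X}$, $u_k\in\mathcal{U}$ for $k=0,\ldots,T-1$, $x_0=x_t^\infty$, $x_T=x_{t+T}^\infty$.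
   Context: System: $x_{t+1}=Ax_t+Bu_t$, $x_t\in\mathbb{R}^n$, $u_t\in\mathbb{R}^d$, with constraints $x_t\in\mathcal{X}=\{x:F_xx\le b_x\}$, $u_t\in\mathcal{U}=\{u:F_uu\le b_u\}$, polyhedra containing the origin in their interior. Stage cost $h(x,u)=x^\top Qx+u^\top Ru$, $Q\succeq0$, $R\succ0$. The task (regulation from a fixed initial state $x_S$) is repeated over iterations $j$; $\boldsymbol{x}^j=[x_0^j,x_1^j,\ldots]$, $\boldsymbol{u}^j=[u_0^j,u_1^j,\ldots]$ are the closed-loop trajectories at iteration $j$, with $x_0^j=x_S$. Convex safe set: $\mathcal{CS}^j=\mathrm{Conv}(\bigcup_{i=0}^j\bigcup_{t\ge0}x_t^i)$. Cost-to-go $J^i_{t\to\infty}(x_t^i)=\sum_{k=t}^\infty h(x_k^i,u_k^i)$. $V$-function: $V^j(x)=\min_{\gamma_k^i\ge0}\sum_{i=0}^j\sum_{k=0}^\infty\gamma_k^iJ^i_{k\to\infty}(x_k^i)$ subject to $\sum_{i,k}\gamma_k^ix_k^i=x$, $\sum_{i,k}\gamma_k^i=1$. Initial trajectory assumption: at iteration $0$ a trajectory $\boldsymbol{x}^0,\boldsymbol{u}^0$ from $x_S$ is given with $x_t^0\in\mathcal{X}$, $u_t^0\in\mathcal{U}$ for all $t$, $x_t^0\to0$, $u_t^0\to0$, and $\sum_t h(x_t^0,u_t^0)<\infty$. LMPC policy at time $t$ of iteration $j$: solve $\min_{u_{t|t},\ldots,u_{t+N-1|t}}\sum_{k=t}^{t+N-1}h(x_{k|t},u_{k|t})+V^{j-1}(x_{t+N|t})$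 subject to $x_{k+1|t}=Ax_{k|t}+Bu_{k|t}$, $x_{k|t}\in\mathcal{X}$, $u_{k|t}\in\mathcal{U}$, $x_{t+N|t}\in\mathcal{CS}^{j-1}$, $x_{t|t}=x_t^j$, and apply the first optimal input $u^{j,*}_{t|t}$ (receding horizon). LICQ assumption: for the given horizon $N$ and for all $t\ge1$, at the optimal solution of the finite-horizon problem $P^*_{t\to t+T}(x_t^\infty,x_{t+T}^\infty)$ with $T=N-1$ (written in terms of the stacked vector $\boldsymbol{z}=\mathrm{Vec}(x_0,u_0,\ldots,x_{T-1},u_{T-1})$ with equality constraints encoding the dynamics, initial and terminal state, and inequality constraints encoding $\mathcal{X},\mathcal{U}$), the gradients of the equality constraints and of the active inequality constraints are linearly independent (the stacked matrix of these gradients has full row rank). *)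

From HB Require Import structures.
From mathcomp Require Import all_boot all_order all_algebra.
From mathcomp Require Import all_classical all_reals all_analysis.
Set Implicit Arguments. Unset Strict Implicit. Unset Printing Implicit Defensive.
Import Order.TTheory GRing.Theory Num.Theory.
Local Open Scope ring_scope.

Definition inPoly (R : realType) (p m : nat) (F : 'M[R]_(p, m)) (b : 'cV[R]_p)
  (x : 'cV[R]_m) : Prop := forall i, (F *m x) i 0 <= b i 0.

Definition origin_interior (R : realType) (p m : nat) (F : 'M[R]_(p, m))
  (b : 'cV[R]_p) : Prop :=
  exists2 e : R, 0 < e & forall x : 'cV[R]_m,
    (forall i, `|x i 0| < e) -> inPoly F b x.

Definition psd (R : realType) (m : nat) (M : 'M[R]_m) : Prop :=
  M^T = M /\ forall v : 'cV[R]_m, 0 <= (v^T *m M *m v) 0 0.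
Definition pd (R : realType) (m : nat) (M : 'M[R]_m) : Prop :=
  M^T = M /\ forall v : 'cV[R]_m, v != 0 -> 0 < (v^T *m M *m v) 0 0.

Section LMPC.
Variable R : realType.
Variables (n d px pu : nat).
Variables (A : 'M[R]_n) (B : 'M[R]_(n, d)).
Variables (Fx : 'M[R]_(px, n)) (bx : 'cV[R]_px) (Fu : 'M[R]_(pu, d)) (bu : 'cV[R]_pu).
Variables (Q : 'M[R]_n) (Rc : 'M[R]_d).

Definition stage_cost (x : 'cV[R]_n) (u : 'cV[R]_d) : R :=
  (x^T *m Q *m x) 0 0 + (u^T *m Rc *m u) 0 0.

Definition costtogo (X : nat -> nat -> 'cV[R]_n) (U : nat -> nat -> 'cV[R]_d)
  (i k : nat) : \bar R :=
  (\sum_(k <= m <oo) (stage_cost (X i m) (U i m))%:E)%E.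

(* gamma (finitely supported on k < M) gives a convex combination of the
   stored states x^i_k, i = 0..j, equal to x. *)
Definition conv_weights (X : nat -> nat -> 'cV[R]_n) (j : nat) (x : 'cV[R]_n)
  (M : nat) (gam : nat -> nat -> R) : Prop :=
  [/\ forall i k, 0 <= gam i k,
      \sum_(i < j.+1) \sum_(k < M) gam i k = 1 &
      \sum_(i < j.+1) \sum_(k < M) gam i k *: X i k = x].

Definition inCS (X : nat -> nat -> 'cV[R]_n) (j : nat) (x : 'cV[R]_n) : Prop :=
  exists M gam, conv_weights X j x M gam.

(* V-function V^j(x) (infimum; +oo outside CS^j). *)
Definition Vfun (X : nat -> nat -> 'cV[R]_n) (U : nat -> nat -> 'cV[R]_d)
  (j : nat) (x : 'cV[R]_n) : \bar R :=
  ereal_inf [set v : \bar R | exists M gam, conv_weights X j x M gam /\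
     v = (\sum_(i < j.+1) \sum_(k < M) (gam i k)%:E * costtogo X U i k)%E].

(* LMPC problem with horizon N at state x, using data of iterations 0..jp
   (jp = j-1). Predicted states xp k = x_{t+k|t}, inputs up k = u_{t+k|t}. *)
Definition lmpc_feasible (N : nat) (X : nat -> nat -> 'cV[R]_n) (jp : nat)
  (x : 'cV[R]_n) (xp : nat -> 'cV[R]_n) (up : nat -> 'cV[R]_d) : Prop :=
  [/\ xp 0%N = x,
      forall k, (k < N)%N ->
        [/\ xp k.+1 = A *m xp k + B *m up k, inPoly Fx bx (xp k) & inPoly Fu bu (up k)]
    & inCS X jp (xp N)].

Definition lmpc_cost (N : nat) (X : nat -> nat -> 'cV[R]_n)
  (U : nat -> nat -> 'cV[R]_d) (jp : nat)
  (xp : nat -> 'cV[R]_n) (up : nat -> 'cV[R]_d) : \bar R :=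
  ((\sum_(k < N) stage_cost (xp k) (up k))%:E + Vfun X U jp (xp N))%E.

Definition lmpc_optimal (N : nat) (X : nat -> nat -> 'cV[R]_n)
  (U : nat -> nat -> 'cV[R]_d) (jp : nat) (x : 'cV[R]_n)
  (xp : nat -> 'cV[R]_n) (up : nat -> 'cV[R]_d) : Prop :=
  lmpc_feasible N X jp x xp up /\
  forall xp' up', lmpc_feasible N X jp x xp' up' ->
    (lmpc_cost N X U jp xp up <= lmpc_cost N X U jp xp' up')%E.

Definition fh_feasible (T : nat) (x0 xT : 'cV[R]_n)
  (x : nat -> 'cV[R]_n) (u : nat -> 'cV[R]_d) : Prop :=
  [/\ x 0%N = x0,
      forall k, (k < T)%N ->
        [/\ x k.+1 = A *m x k + B *m u k, inPoly Fx bx (x k) & inPoly Fu bu (u k)]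
    & x T = xT].

Definition fh_cost (T : nat) (x : nat -> 'cV[R]_n) (u : nat -> 'cV[R]_d) : R :=
  \sum_(k < T) stage_cost (x k) (u k).

Definition fh_optimal (T : nat) (x0 xT : 'cV[R]_n)
  (x : nat -> 'cV[R]_n) (u : nat -> 'cV[R]_d) : Prop :=
  fh_feasible T x0 xT x u /\
  forall x' u', fh_feasible T x0 xT x' u' -> fh_cost T x u <= fh_cost T x' u'.

Definition fh_optimizer (T : nat) (x0 xT : 'cV[R]_n)
  (x : nat -> 'cV[R]_n) (u : nat -> 'cV[R]_d) : Prop :=
  fh_optimal T x0 xT x u /\
  forall x' u', fh_optimal T x0 xT x' u' ->
    (forall k, (k <= T)%N -> x' k = x k) /\ (forall k, (k < T)%N -> u' k = u k).

(* LICQ for P*_{t -> t+T} written in z = Vec(x_0,u_0,...,x_{T-1},u_{T-1}).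
   Coordinates of z: (k, inl l) = (x_k)_l, (k, inr l) = (u_k)_l.
   Constraint rows: equality rows (k, i), k = 0..T  (k = 0: x_0 = x0;
   1 <= k <= T-1: x_k - A x_{k-1} - B u_{k-1} = 0; k = T: A x_{T-1} + B u_{T-1} = xT,
   with gradient taken of its negative), state inequality rows (k, p),
   input inequality rows (k, p), k = 0..T-1. *)
Definition zcol (T : nat) := ('I_T * ('I_n + 'I_d))%type.
Definition crow (T : nat) :=
  (('I_T.+1 * 'I_n) + (('I_T * 'I_px) + ('I_T * 'I_pu)))%type.

Definition grad (T : nat) (r : crow T) (c : zcol T) : R :=
  let: (m, cl) := c in
  match r, cl with
  | inl (k, i), inl l =>
      ((nat_of_ord m == nat_of_ord k) && (l == i))%:R
      - (m.+1 == nat_of_ord k)%:R * A i l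
  | inl (k, i), inr l => - ((m.+1 == nat_of_ord k)%:R * B i l)
  | inr (inl (k, p)), inl l => (m == k)%:R * Fx p l
  | inr (inl _), inr _ => 0
  | inr (inr _), inl _ => 0
  | inr (inr (k, p)), inr l => (m == k)%:R * Fu p l
  end.

Definition active (T : nat) (x : nat -> 'cV[R]_n) (u : nat -> 'cV[R]_d)
  (r : crow T) : bool :=
  match r with
  | inl _ => true
  | inr (inl (k, p)) => (Fx *m x k) p 0 == bx p 0
  | inr (inr (k, p)) => (Fu *m u k) p 0 == bu p 0
  end.

Definition licq (T : nat) (x : nat -> 'cV[R]_n) (u : nat -> 'cV[R]_d) : Prop :=
  forall lam : crow T -> R,
    (forall r, ~~ active x u r -> lam r = 0) ->
    (forall c, \sum_(r : crow T) lam r * grad r c = 0) ->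
    forall r, lam r = 0.

End LMPC.

(* At the fixed point, [X c] is the closed loop of the LMPC policy built on its
   own data. The classical LMPC argument (shift the optimal plan one step and
   close it with the convex combination of the stored successor states) shows
   that the LMPC value decreases along the closed loop by at least the stage
   cost. Telescoping, every window of length T <= N of the closed loop is
   optimal for P*: splicing a cheaper segment into the LMPC plan would beat the
   LMPC value. By the first-order condition, the slope of the cost along every
   linearised feasible direction of such a window is nonnegative. For a longer
   window, LICQ at the window of length N-1 starting one step later splits any
   feasible direction into a direction on the first N steps plus a feasible
   direction of the window shifted by one, so by induction the slope condition
   holds on every window. The cost being convex, this makes the window optimal,
   and uniquely so since the input cost is strictly convex and the states are
   determined by the inputs. *)

From HB Require Import structures.
From mathcomp Require Import all_boot all_order all_algebra.
From mathcomp Require Import all_classical all_reals all_analysis.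
From mathcomp Require Import ring lra.
Import Order.TTheory GRing.Theory Num.Theory numFieldNormedType.Exports.
Local Open Scope classical_set_scope.
Local Open Scope ring_scope.

Set Implicit Arguments.
Unset Strict Implicit.
Unset Printing Implicit Defensive.

Lemma sum_ord_widen0 (R : nmodType) (f : nat -> R) T M : (T <= M)%N ->
  (forall k, (T <= k < M)%N -> f k = 0) -> \sum_(k < M) f k = \sum_(k < T) f k.
Proof.
move=> TM f_out; rewrite (big_ord_widen M f TM) [RHS]big_mkcond; apply: eq_bigr => k _.
by case: ifP => // /negbT; rewrite -leqNgt => Tk; rewrite f_out // Tk ltn_ord.
Qed.

Lemma sum_ord_recl_pred (V : nmodType) m (f : nat -> V) : (0 < m)%N ->
  \sum_(k < m) f k = f 0%N + \sum_(k < m.-1) f k.+1.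
Proof. by case: m => // m _; rewrite big_ord_recl. Qed.

Lemma sum_ord_recr_pred (V : nmodType) m (f : nat -> V) : (0 < m)%N ->
  \sum_(k < m) f k = \sum_(k < m.-1) f k + f m.-1.
Proof. by case: m => // m _; rewrite big_ord_recr. Qed.

Lemma big_nat_shift (T : Type) (idx : T) (op : T -> T -> T) (f : nat -> T) k K :
  \big[op/idx]_(k <= m < k + K) f m = \big[op/idx]_(s < K) f (k + s)%N.
Proof.
rewrite -{1}(add0n k) big_addn addKn big_mkord; apply: eq_bigr => s _.
by rewrite addnC.
Qed.

Lemma big_delta2 (T : Type) (idx : T) (op : Monoid.com_law idx) a b i0 k0
    (F : nat -> nat -> T) : (i0 < a)%N -> (k0 < b)%N ->
  \big[op/idx]_(i < a) \big[op/idx]_(k < b)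
     (if (i == i0 :> nat) && (k == k0 :> nat) then F i k else idx) = F i0 k0.
Proof.
move=> i0a k0b; rewrite (bigD1 (Ordinal i0a)) //= eqxx /=.
rewrite (bigD1 (Ordinal k0b)) //= eqxx /= big1 => [|k /negbTE k_neq]; last first.
  by rewrite -val_eqE /= in k_neq; rewrite k_neq.
rewrite Monoid.mulm1 big1 ?Monoid.mulm1 // => i /negbTE i_neq.
by rewrite -val_eqE /= in i_neq; apply: big1 => k _; rewrite i_neq.
Qed.

Section BilinearForm.
Context {R : realFieldType}.

Definition bform {m : nat} (M : 'M[R]_m) (v w : 'cV[R]_m) : R := (v^T *m M *m w) 0 0.

Context {m : nat} (M : 'M[R]_m).

Lemma bformDl v1 v2 w : bform M (v1 + v2) w = bform M v1 w + bform M v2 w.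
Proof. by rewrite /bform raddfD /= !mulmxDl mxE. Qed.

Lemma bformZl a v w : bform M (a *: v) w = a * bform M v w.
Proof. by rewrite /bform linearZ /= -!scalemxAl mxE. Qed.

Lemma bformDr v w1 w2 : bform M v (w1 + w2) = bform M v w1 + bform M v w2.
Proof. by rewrite /bform mulmxDr mxE. Qed.

Lemma bformZr a v w : bform M v (a *: w) = a * bform M v w.
Proof. by rewrite /bform -scalemxAr mxE. Qed.

Lemma bformBl v1 v2 w : bform M (v1 - v2) w = bform M v1 w - bform M v2 w.
Proof. by rewrite bformDl -scaleN1r bformZl mulN1r. Qed.

Lemma bformBr v w1 w2 : bform M v (w1 - w2) = bform M v w1 - bform M v w2.
Proof. by rewrite bformDr -scaleN1r bformZr mulN1r. Qed.

Lemma bform0l w : bform M 0 w = 0.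
Proof. by rewrite -(scale0r 0) bformZl mul0r. Qed.

Lemma bform0r v : bform M v 0 = 0.
Proof. by rewrite -(scale0r 0) bformZr mul0r. Qed.

Lemma bform_suml (I : Type) (s : seq I) (P : pred I) (F : I -> 'cV[R]_m) w :
  bform M (\sum_(i <- s | P i) F i) w = \sum_(i <- s | P i) bform M (F i) w.
Proof. exact: (big_morph _ (fun a b => bformDl a b w) (bform0l w)). Qed.

Hypothesis M_sym : M^T = M.

Lemma bformC v w : bform M v w = bform M w v.
Proof.
rewrite /bform; transitivity ((v^T *m M *m w)^T 0 0); first by rewrite [RHS]mxE.
by rewrite !trmx_mul trmxK M_sym mulmxA.
Qed.

Lemma bform_addZ v w a :
  bform M (v + a *: w) (v + a *: w) = bform M v v + 2 * a * bform M v w + a ^+ 2 * bform M w w.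
Proof. rewrite !bformDl !bformDr !bformZl !bformZr (bformC w v); ring. Qed.

Hypothesis M_ge0 : forall v, 0 <= bform M v v.

Lemma bform_jensen (I : finType) (c : I -> R) (v : I -> 'cV[R]_m) :
  (forall i, 0 <= c i) -> \sum_i c i = 1 ->
  bform M (\sum_i c i *: v i) (\sum_i c i *: v i) <= \sum_i c i * bform M (v i) (v i).
Proof.
move=> c_ge0 c_sum1; set mean := \sum_i c i *: v i.
have spread_ge0 : 0 <= \sum_i c i * bform M (v i - mean) (v i - mean).
  by apply: sumr_ge0 => i _; rewrite mulr_ge0.
have cross : \sum_i c i * bform M (v i) mean = bform M mean mean.
  by rewrite /mean bform_suml; apply: eq_bigr => i _; rewrite bformZl.
suff expand : \sum_i c i * bform M (v i - mean) (v i - mean) =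
   \sum_i c i * bform M (v i) (v i) - 2 * \sum_i c i * bform M (v i) mean
   + (\sum_i c i) * bform M mean mean.
  by move: spread_ge0; rewrite expand cross c_sum1; lra.
rewrite mulr_sumr mulr_suml -sumrB -big_split /=; apply: eq_bigr => i _.
rewrite !bformBl !bformBr (bformC mean); ring.
Qed.

End BilinearForm.

Lemma free_rows_solvable (F : fieldType) (I J : finType) (g : I -> J -> F) (P : pred I) :
  (forall lam : I -> F, (forall r, ~~ P r -> lam r = 0) ->
     (forall c, \sum_r lam r * g r c = 0) -> forall r, lam r = 0) ->
  forall b : I -> F, exists z : J -> F, forall r, P r -> \sum_c g r c * z c = b r.
Proof.
move=> rows_free b.
have sum_enum (K : finType) (f : K -> F) : \sum_k f k = \sum_(i < #|K|) f (enum_val i).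
  by rewrite -big_enum_val; apply: eq_bigl => k; rewrite inE.
pose H : 'M[F]_(#|I|, #|J|) :=
  \matrix_(i, j) ((P (enum_val i))%:R * g (enum_val i) (enum_val j)).
pose bP : 'rV[F]_#|I| := \row_i ((P (enum_val i))%:R * b (enum_val i)).
have bP_in_span : (bP <= H^T)%MS.
  rewrite submxE; set K := cokermx H^T.
  have HK0 : H^T *m K = 0 := mulmx_coker H^T.
  have K_act j r : (P r)%:R * K (enum_rank r) j = 0.
    apply: (rows_free (fun r => (P r)%:R * K (enum_rank r) j)) => [{}r /negbTE->|c].
      by rewrite mul0r.
    transitivity ((H^T *m K) (enum_rank c) j); last by rewrite HK0 mxE.
    rewrite mxE sum_enum; apply: eq_bigr => i _.
    by rewrite !mxE enum_valK enum_rankK mulrAC.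
  apply/eqP/matrixP => i j; rewrite !mxE big1 // => k _.
  by rewrite mxE mulrAC -[k in K k](enum_valK k) K_act mul0r.
have [D HD] := submxP bP_in_span.
exists (fun c => D 0 (enum_rank c)) => r Pr.
have := congr1 (fun v : 'rV[F]_#|I| => v 0 (enum_rank r)) HD.
rewrite !mxE enum_rankK Pr mul1r => ->.
rewrite sum_enum; apply: eq_bigr => j _.
by rewrite !mxE enum_rankK Pr enum_valK mul1r mulrC.
Qed.

Section SmallSteps.
Context {R : realFieldType}.

Lemma small_step_le (a b c : R) : a <= b -> (a = b -> c <= 0) ->
  exists2 e : R, 0 < e & forall s, 0 <= s <= e -> a + s * c <= b.
Proof.
move=> ab tight; have [eab|] := eqVneq a b.
  by exists 1 => // s /andP[s_ge0 _]; have := tight eab; nra.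
move=> nab; have {}ab : a < b by rewrite lt_neqAle nab.
have norm_gt0 : 0 < `|c| + 1 by rewrite ltr_pwDr ?normr_ge0.
exists ((b - a) / (`|c| + 1)); first by rewrite divr_gt0 // subr_gt0.
move=> s /andP[s_ge0]; rewrite ler_pdivlMr // => s_le.
have := ler_norm c; have := normr_ge0 c; nra.
Qed.

Lemma finite_small_step (I : finType) (P : I -> R -> Prop) :
  (forall i, exists2 e : R, 0 < e & forall s, 0 <= s <= e -> P i s) ->
  exists2 e : R, 0 < e & forall i s, 0 <= s <= e -> P i s.
Proof.
move=> /fin_all_exists2[e e_gt0 eP]; exists (\big[Num.min/1]_i e i).
  by apply: (big_ind (fun v => 0 < v)) => // a b a0 b0; rewrite lt_min a0 b0.
move=> i s /andP[s_ge0 s_le]; apply: eP; rewrite s_ge0 (le_trans s_le) //.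
by rewrite (bigD1 i) //= ge_min lexx.
Qed.

Lemma small_step_sq_ge0 (e a b : R) : 0 < e ->
  (forall s, 0 < s <= e -> 0 <= s * a + s ^+ 2 * b) -> 0 <= a.
Proof.
move=> e_gt0 step; rewrite leNgt; apply/negP => a_lt0.
have norm_gt0 : 0 < `|b| + 1 by rewrite ltr_pwDr ?normr_ge0.
pose s := Num.min e (- a / (`|b| + 1)).
have s_gt0 : 0 < s by rewrite lt_min e_gt0 divr_gt0 // oppr_gt0.
have s_small : s * (`|b| + 1) <= - a by rewrite -ler_pdivlMr // ge_min lexx orbT.
have := step s; rewrite s_gt0 ge_min lexx => /(_ isT).
have := ler_norm b; have := normr_ge0 b; nra.
Qed.

End SmallSteps.

(** * First-order optimality for the finite-horizon problem *)

Section FiniteHorizon.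
Variables (R : realType) (n d px pu : nat).
Variables (A : 'M[R]_n) (B : 'M[R]_(n, d)).
Variables (Fx : 'M[R]_(px, n)) (bx : 'cV[R]_px) (Fu : 'M[R]_(pu, d)) (bu : 'cV[R]_pu).
Variables (Q : 'M[R]_n) (Rc : 'M[R]_d).

Local Notation fh_feasible := (fh_feasible A B Fx bx Fu bu).
Local Notation fh_optimal := (fh_optimal A B Fx bx Fu bu Q Rc).
Local Notation fh_cost := (fh_cost Q Rc).

Definition feasible_direction T (x : nat -> 'cV[R]_n) (u : nat -> 'cV[R]_d)
    (dx : nat -> 'cV[R]_n) (du : nat -> 'cV[R]_d) : Prop :=
  [/\ dx 0%N = 0, dx T = 0,
      forall k, (k < T)%N -> dx k.+1 = A *m dx k + B *m du k,
      forall k p, (k < T)%N -> (Fx *m x k) p 0 = bx p 0 -> (Fx *m dx k) p 0 <= 0 &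
      forall k p, (k < T)%N -> (Fu *m u k) p 0 = bu p 0 -> (Fu *m du k) p 0 <= 0].

Definition fh_slope T (x : nat -> 'cV[R]_n) (u : nat -> 'cV[R]_d)
    (dx : nat -> 'cV[R]_n) (du : nat -> 'cV[R]_d) : R :=
  \sum_(k < T) (bform Q (x k) (dx k) + bform Rc (u k) (du k)).

Lemma stage_costE x u : stage_cost Q Rc x u = bform Q x x + bform Rc u u.
Proof. by []. Qed.

Lemma inPoly_small_step p m (F : 'M[R]_(p, m)) b v w :
  inPoly F b v -> (forall q, (F *m v) q 0 = b q 0 -> (F *m w) q 0 <= 0) ->
  exists2 e : R, 0 < e & forall s, 0 <= s <= e -> inPoly F b (v + s *: w).
Proof.
move=> vF tight.
suff [e e_gt0 step] : exists2 e : R, 0 < e &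
    forall q s, 0 <= s <= e -> (F *m (v + s *: w)) q 0 <= b q 0.
  by exists e => // s s_in q; apply: step.
apply: finite_small_step => q; have [e e_gt0 step] := small_step_le (vF q) (tight q).
by exists e => // s /step; rewrite mulmxDr -scalemxAr !mxE.
Qed.

Lemma inPoly_conv p m (F : 'M[R]_(p, m)) b (I : finType)
    (c : I -> R) (v : I -> 'cV[R]_m) :
  (forall i, inPoly F b (v i)) -> (forall i, 0 <= c i) -> \sum_i c i = 1 ->
  inPoly F b (\sum_i c i *: v i).
Proof.
move=> vF c_ge0 c_sum1 q; rewrite mulmx_sumr summxE.
under eq_bigr => i _ do rewrite -scalemxAr mxE.
apply: le_trans (ler_sum _ (fun i _ => ler_wpM2l (c_ge0 i) (vF i q))) _.
by rewrite -mulr_suml c_sum1 mul1r.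
Qed.

Lemma fh_feasible_small_step T x0 xT x u dx du :
  fh_feasible T x0 xT x u -> feasible_direction T x u dx du ->
  exists2 e : R, 0 < e & forall s, 0 <= s <= e ->
    fh_feasible T x0 xT (fun k => x k + s *: dx k) (fun k => u k + s *: du k).
Proof.
move=> [x_0 x_k x_T] [dx_0 dx_T dx_k dFx dFu].
suff [e e_gt0 step] : exists2 e : R, 0 < e & forall (k : 'I_T) s, 0 <= s <= e ->
    inPoly Fx bx (x k + s *: dx k) /\ inPoly Fu bu (u k + s *: du k).
  exists e => // s s_in; split.
  - by rewrite x_0 dx_0 scaler0 addr0.
  - move=> k kT; have [xk1 _ _] := x_k k kT; have [xs us] := step (Ordinal kT) s s_in.
    split=> //; rewrite xk1 dx_k // !mulmxDr scalerDr -!scalemxAr; exact: addrACA.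
  - by rewrite x_T dx_T scaler0 addr0.
apply: finite_small_step => k; have [_ xk uk] := x_k k (ltn_ord k).
have [ex ex_gt0 stepx] := inPoly_small_step xk (dFx k ^~ (ltn_ord k)).
have [eu eu_gt0 stepu] := inPoly_small_step uk (dFu k ^~ (ltn_ord k)).
exists (Num.min ex eu); first by rewrite lt_min ex_gt0.
move=> s /andP[s_ge0]; rewrite le_min => /andP[sx su].
by split; [apply: stepx | apply: stepu]; rewrite s_ge0.
Qed.

Lemma feasible_direction_sub T x0 xT x u x' u' :
  fh_feasible T x0 xT x u -> fh_feasible T x0 xT x' u' ->
  feasible_direction T x u (fun k => x' k - x k) (fun k => u' k - u k).
Proof.
move=> [x_0 x_k x_T] [x'_0 x'_k x'_T]; split.
- by rewrite x_0 x'_0 subrr.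
- by rewrite x_T x'_T subrr.
- move=> k kT; have [-> _ _] := x_k k kT; have [-> _ _] := x'_k k kT.
  by rewrite !mulmxBr opprD addrACA.
- move=> k p kT tight; have [_ x'F _] := x'_k k kT.
  by rewrite mulmxBr mxE [X in _ + X]mxE tight subr_le0.
- move=> k p kT tight; have [_ _ u'F] := x'_k k kT.
  by rewrite mulmxBr mxE [X in _ + X]mxE tight subr_le0.
Qed.

Lemma fh_feasible_states_eq T x0 xT x u x' u' :
  fh_feasible T x0 xT x u -> fh_feasible T x0 xT x' u' ->
  (forall k, (k < T)%N -> u' k = u k) -> forall k, (k <= T)%N -> x' k = x k.
Proof.
move=> [x_0 x_k _] [x'_0 x'_k _] u_eq; elim=> [|k IH] kT; first by rewrite x_0 x'_0.
have [-> _ _] := x'_k k kT; have [-> _ _] := x_k k kT.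
by rewrite IH ?u_eq // ltnW.
Qed.

Hypotheses (Q_psd : psd Q) (Rc_pd : pd Rc).

Lemma fh_cost_perturb T x u dx du s :
  fh_cost T (fun k => x k + s *: dx k) (fun k => u k + s *: du k) =
  fh_cost T x u + 2 * s * fh_slope T x u dx du + s ^+ 2 * fh_cost T dx du.
Proof.
rewrite /fh_cost /fh_slope !mulr_sumr -!big_split /=; apply: eq_bigr => k _.
by rewrite !stage_costE !bform_addZ ?Q_psd.1 ?Rc_pd.1 //; ring.
Qed.

Lemma fh_cost_sub T x u x' u' : fh_cost T x' u' =
  fh_cost T x u + 2 * fh_slope T x u (fun k => x' k - x k) (fun k => u' k - u k)
  + fh_cost T (fun k => x' k - x k) (fun k => u' k - u k).
Proof.
have := fh_cost_perturb T x u (fun k => x' k - x k) (fun k => u' k - u k) 1.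
rewrite mulr1 expr1n mul1r => <-.
by apply: eq_bigr => k _; rewrite !scale1r !subrKC.
Qed.

Lemma bform_Rc_ge0 v : 0 <= bform Rc v v.
Proof. by have [->|/Rc_pd.2/ltW] := eqVneq v 0; rewrite ?bform0l. Qed.

Lemma stage_cost_ge0 x u : 0 <= stage_cost Q Rc x u.
Proof. by rewrite addr_ge0 ?Q_psd.2 ?bform_Rc_ge0. Qed.

Lemma fh_cost_ge0 T x u : 0 <= fh_cost T x u.
Proof. by apply: sumr_ge0 => k _; apply: stage_cost_ge0. Qed.

Lemma fh_cost_eq0_inputs T dx du :
  fh_cost T dx du = 0 -> forall k, (k < T)%N -> du k = 0.
Proof.
move=> /psumr_eq0P cost0 k kT; apply: contraTeq isT => du_neq0.
have := cost0 (fun k _ => stage_cost_ge0 (dx k) (du k)) (Ordinal kT) isT.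
have : 0 <= bform Q (dx k) (dx k) := Q_psd.2 _.
have : 0 < bform Rc (du k) (du k) := Rc_pd.2 _ du_neq0.
rewrite stage_costE /=; lra.
Qed.

Lemma fh_optimal_slope_ge0 T x0 xT x u dx du :
  fh_optimal T x0 xT x u -> feasible_direction T x u dx du ->
  0 <= fh_slope T x u dx du.
Proof.
move=> [feas opt] dir; have [e e_gt0 step] := fh_feasible_small_step feas dir.
suff : 0 <= 2 * fh_slope T x u dx du by rewrite pmulr_rge0.
apply: (small_step_sq_ge0 (b := fh_cost T dx du) e_gt0) => s /andP[s_gt0 s_le].
have := opt _ _ (step s _); rewrite ltW ?s_le // fh_cost_perturb => /(_ isT).
nra.
Qed.

Lemma fh_optimizer_of_slope_ge0 T x0 xT x u :
  fh_feasible T x0 xT x u ->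
  (forall dx du, feasible_direction T x u dx du -> 0 <= fh_slope T x u dx du) ->
  fh_optimizer A B Fx bx Fu bu Q Rc T x0 xT x u.
Proof.
move=> feas slope_ge0.
have cost_le x' u' : fh_feasible T x0 xT x' u' ->
    fh_cost T x u + fh_cost T (fun k => x' k - x k) (fun k => u' k - u k) <= fh_cost T x' u'.
  move=> feas'; have := slope_ge0 _ _ (feasible_direction_sub feas feas').
  rewrite (fh_cost_sub T x u x'); lra.
split.
  split=> // x' u' /cost_le; have := fh_cost_ge0 T (fun k => x' k - x k) (fun k => u' k - u k).
  lra.
move=> x' u' [feas' opt'].
have gap0 : fh_cost T (fun k => x' k - x k) (fun k => u' k - u k) = 0.
  have := opt' _ _ feas; have := cost_le _ _ feas'.
  have := fh_cost_ge0 T (fun k => x' k - x k) (fun k => u' k - u k); lra.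
have u_eq k : (k < T)%N -> u' k = u k.
  by move/(fh_cost_eq0_inputs gap0)/eqP; rewrite subr_eq0 => /eqP.
by split=> //; apply: fh_feasible_states_eq feas feas' u_eq.
Qed.

End FiniteHorizon.

(** * Constraint gradients and LICQ *)

Section ConstraintGradients.
Variables (R : realType) (n d px pu : nat).
Variables (A : 'M[R]_n) (B : 'M[R]_(n, d)).
Variables (Fx : 'M[R]_(px, n)) (bx : 'cV[R]_px) (Fu : 'M[R]_(pu, d)) (bu : 'cV[R]_pu).

(* Zero outside [0, T), so that row [k = T] of [grad] is the (negated)
   terminal constraint. *)
Definition zstate T (z : zcol n d T -> R) (k : nat) : 'cV[R]_n :=
  if insub k is Some m then \col_l z (m, inl l) else 0.
Definition zinput T (z : zcol n d T -> R) (k : nat) : 'cV[R]_d :=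
  if insub k is Some m then \col_l z (m, inr l) else 0.

Lemma zstate_out T z k : (T <= k)%N -> zstate (T:=T) z k = 0.
Proof. by move=> Tk; rewrite /zstate insubF // ltnNge Tk. Qed.
Lemma zinput_out T z k : (T <= k)%N -> zinput (T:=T) z k = 0.
Proof. by move=> Tk; rewrite /zinput insubF // ltnNge Tk. Qed.
Lemma zstateE T z (m : 'I_T) l : zstate z m l 0 = z (m, inl l).
Proof. by rewrite /zstate valK mxE. Qed.
Lemma zinputE T z (m : 'I_T) l : zinput z m l 0 = z (m, inr l).
Proof. by rewrite /zinput valK mxE. Qed.

Lemma sum_zcol T (F : zcol n d T -> R) : \sum_c F c =
  \sum_(m : 'I_T) (\sum_(l < n) F (m, inl l) + \sum_(l < d) F (m, inr l)).
Proof.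
rewrite (eq_bigr (fun c => F (c.1, c.2))); last by case.
rewrite -(pair_bigA _ (fun a b => F (a, b))) /=.
by apply: eq_bigr => m _; rewrite big_sumType.
Qed.

Lemma sum_ord_delta T (f : nat -> R) k : (forall j, (T <= j)%N -> f j = 0) ->
  \sum_(m < T) (m == k :> nat)%:R * f m = f k.
Proof.
move=> f_out; have [kT|Tk] := ltnP k T.
  rewrite (bigD1 (Ordinal kT)) //= eqxx mul1r big1 ?addr0 // => m mk.
  by rewrite -val_eqE /= in mk; rewrite (negbTE mk) mul0r.
rewrite f_out // big1 // => m _.
by rewrite ltn_eqF ?mul0r // (leq_trans (ltn_ord m) Tk).
Qed.

Lemma sum_ord_deltaS T (f : nat -> R) k : (forall j, (T <= j)%N -> f j = 0) ->
  \sum_(m < T) (m.+1 == k :> nat)%:R * f m = if k == 0%N then 0 else f k.-1.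
Proof.
case: k => [|k] f_out /=; first by rewrite big1 // => m _; rewrite mul0r.
by rewrite -(sum_ord_delta k f_out); apply: eq_bigr => m _; rewrite eqSS.
Qed.

Lemma grad_state_row T z (k : 'I_T) (p : 'I_px) :
  \sum_c grad A B Fx Fu (inr (inl (k, p))) c * z c = (Fx *m zstate z k) p 0.
Proof.
rewrite sum_zcol (bigD1 k) //= [X in _ + X]big1 ?addr0; last first.
  by move=> m /negbTE mk; rewrite !big1 ?addr0 // => l _; rewrite ?mk ?mulr0n !mul0r.
rewrite [X in _ + X]big1 ?addr0 ?mxE; last by move=> l _; rewrite mul0r.
by apply: eq_bigr => l _; rewrite eqxx zstateE mul1r.
Qed.

Lemma grad_input_row T z (k : 'I_T) (p : 'I_pu) :
  \sum_c grad A B Fx Fu (inr (inr (k, p))) c * z c = (Fu *m zinput z k) p 0.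
Proof.
rewrite sum_zcol (bigD1 k) //= [X in _ + X]big1 ?addr0; last first.
  by move=> m /negbTE mk; rewrite !big1 ?addr0 // => l _; rewrite ?mk ?mulr0n !mul0r.
rewrite [X in X + _]big1 ?add0r ?mxE; last by move=> l _; rewrite mul0r.
by apply: eq_bigr => l _; rewrite eqxx zinputE mul1r.
Qed.

Lemma grad_dynamics_row T z (k : 'I_T.+1) (i : 'I_n) :
  \sum_c grad A B Fx Fu (inl (k, i)) c * z c =
  (zstate z k - (if k == 0 :> nat then 0
                 else A *m zstate z k.-1 + B *m zinput z k.-1)) i 0.
Proof.
have state_part (m : 'I_T) : \sum_(l < n)
    (((m == k :> nat) && (l == i))%:R - (m.+1 == k :> nat)%:R * A i l) * z (m, inl l)
  = (m == k :> nat)%:R * zstate z m i 0 - (m.+1 == k :> nat)%:R * (A *m zstate z m) i 0.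
  rewrite mxE mulr_sumr; under eq_bigr => l _ do rewrite mulrBl.
  rewrite sumrB (bigD1 i) //= eqxx andbT big1 ?addr0 ?zstateE; last first.
    by move=> l /negbTE ->; rewrite andbF mul0r.
  by congr (_ - _); apply: eq_bigr => l _; rewrite zstateE mulrA.
have input_part (m : 'I_T) : \sum_(l < d) - ((m.+1 == k :> nat)%:R * B i l) * z (m, inr l)
  = - ((m.+1 == k :> nat)%:R * (B *m zinput z m) i 0).
  rewrite mxE mulr_sumr -sumrN; apply: eq_bigr => l _.
  by rewrite zinputE mulNr mulrA.
rewrite sum_zcol /=; under eq_bigr => m _ do rewrite state_part input_part.
rewrite big_split /= sumrB sumrN.
rewrite (sum_ord_delta (f := fun m => zstate z m i 0)); last first.
  by move=> j Tj; rewrite zstate_out // mxE.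
rewrite (sum_ord_deltaS (f := fun m => (A *m zstate z m) i 0)); last first.
  by move=> j Tj; rewrite zstate_out // mulmx0 mxE.
rewrite (sum_ord_deltaS (f := fun m => (B *m zinput z m) i 0)); last first.
  by move=> j Tj; rewrite zinput_out // mulmx0 mxE.
by rewrite !mxE; case: ifP => _; rewrite ?mxE; ring.
Qed.

Lemma licq_direction T x u (v : 'cV[R]_n) (gx : nat -> 'cV[R]_px) (gu : nat -> 'cV[R]_pu) :
  licq A B Fx bx Fu bu T x u ->
  exists wx wu, [/\ wx 0%N = v,
    forall k, wx k.+1 = A *m wx k + B *m wu k,
    forall k, (T <= k)%N -> wx k = 0 /\ wu k = 0,
    forall k p, (k < T)%N -> (Fx *m x k) p 0 = bx p 0 -> (Fx *m wx k) p 0 = gx k p 0 &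
    forall k p, (k < T)%N -> (Fu *m u k) p 0 = bu p 0 -> (Fu *m wu k) p 0 = gu k p 0].
Proof.
move=> indep.
pose rhs (r : crow n px pu T) : R := match r with
  | inl (k, i) => if k == 0 :> nat then v i 0 else 0
  | inr (inl (k, p)) => gx k p 0
  | inr (inr (k, p)) => gu k p 0 end.
have [z zP] := free_rows_solvable indep rhs.
exists (zstate z), (zinput z); split.
- apply/matrixP => i j; rewrite ord1.
  by have := zP (inl (ord0, i)) isT; rewrite grad_dynamics_row /= subr0.
- move=> k; have [kT|Tk] := ltnP k T; last first.
    by rewrite !zstate_out ?zinput_out ?mulmx0 ?addr0 // ltnW.
  apply/matrixP => i j; rewrite ord1.
  have := zP (inl (Ordinal (kT : k.+1 < T.+1)%N, i)) isT.
  by rewrite grad_dynamics_row /= !mxE => /eqP; rewrite subr_eq0 => /eqP.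
- by move=> k Tk; rewrite zstate_out ?zinput_out.
- move=> k p kT tight; have := zP (inr (inl (Ordinal kT, p))).
  by rewrite grad_state_row /= tight eqxx => ->.
- move=> k p kT tight; have := zP (inr (inr (Ordinal kT, p))).
  by rewrite grad_input_row /= tight eqxx => ->.
Qed.

End ConstraintGradients.

(** * Splitting feasible directions *)

Definition window (V : Type) (x : nat -> V) (t : nat) : nat -> V := fun k => x (t + k)%N.

Section WindowDecomposition.
Variables (R : realType) (n d px pu : nat).
Variables (A : 'M[R]_n) (B : 'M[R]_(n, d)).
Variables (Fx : 'M[R]_(px, n)) (bx : 'cV[R]_px) (Fu : 'M[R]_(pu, d)) (bu : 'cV[R]_pu).
Variables (Q : 'M[R]_n) (Rc : 'M[R]_d).
Variables (N : nat) (x : nat -> 'cV[R]_n) (u : nat -> 'cV[R]_d).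
Hypothesis N_gt0 : (0 < N)%N.

Local Notation direction := (feasible_direction A B Fx bx Fu bu).
Local Notation slope := (fh_slope Q Rc).

(* A feasible direction on the window of length T1+1 at t is the sum of a
   direction on the first N steps ([head]) and of the shift of a feasible
   direction on the window of length T1 at t+1 ([tail]); [w], provided by LICQ
   at t+1, is the part of [dx] carried by the head. *)
Section Splitting.

Variables (t T1 : nat) (dx wx : nat -> 'cV[R]_n) (du wu : nat -> 'cV[R]_d).
Hypotheses (NT1 : (N <= T1)%N) (dir : direction T1.+1 (window x t) (window u t) dx du).
Hypotheses (w_0 : wx 0%N = dx 1%N) (w_dyn : forall k, wx k.+1 = A *m wx k + B *m wu k).
Hypothesis w_out : forall k, (N.-1 <= k)%N -> wx k = 0 /\ wu k = 0.
Hypothesis w_Fx : forall k p, (k < N.-1)%N -> (Fx *m x (t.+1 + k)%N) p 0 = bx p 0 ->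
  (Fx *m wx k) p 0 = (Fx *m dx k.+1) p 0.
Hypothesis w_Fu : forall k p, (k < N.-1)%N -> (Fu *m u (t.+1 + k)%N) p 0 = bu p 0 ->
  (Fu *m wu k) p 0 = (Fu *m du k.+1) p 0.

Definition head_x j := if j is j'.+1 then wx j' else 0.
Definition head_u j := if j is j'.+1 then wu j' else du 0%N.
Definition tail_x j := dx j.+1 - wx j.
Definition tail_u j := du j.+1 - wu j.

Lemma head_direction : direction N (window x t) (window u t) head_x head_u.
Proof.
have [dx_0 _ dx_dyn dFx dFu] := dir.
have kN1 k : (k.+1 < N)%N -> (k < N.-1)%N by move=> kN; rewrite -ltnS prednK.
have kT1 k : (k < N)%N -> (k < T1.+1)%N by move=> kN; rewrite ltnS ltnW // (leq_trans kN).
split=> //.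
- by rewrite -(prednK N_gt0); apply: (w_out (leqnn _)).1.
- case=> [|k] kN /=; last exact: w_dyn.
  by rewrite w_0 mulmx0 add0r dx_dyn // dx_0 mulmx0 add0r.
- case=> [|k] p kN tight /=; first by rewrite mulmx0 mxE.
  by rewrite w_Fx ?kN1 ?addSnnS //; apply: dFx (kT1 _ kN) tight.
- case=> [|k] p kN tight /=; first exact: dFu.
  by rewrite w_Fu ?kN1 ?addSnnS //; apply: dFu (kT1 _ kN) tight.
Qed.

Lemma tail_direction : direction T1 (window x t.+1) (window u t.+1) tail_x tail_u.
Proof.
have [_ dx_T dx_dyn dFx dFu] := dir.
have T1_out : (N.-1 <= T1)%N by rewrite (leq_trans (leq_pred N)).
split.
- by rewrite /tail_x w_0 subrr.
- by rewrite /tail_x dx_T (w_out T1_out).1 subrr.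
- by move=> k kT; rewrite /tail_x /tail_u w_dyn dx_dyn // !mulmxBr opprD addrACA.
- move=> k p kT tight; rewrite /tail_x mulmxBr.
  have [kN|Nk] := ltnP k N.-1; first by rewrite mxE [X in _ + X]mxE w_Fx ?subrr.
  rewrite (w_out Nk).1 mulmx0 subr0; apply: dFx => //.
  by rewrite /window -addSnnS.
- move=> k p kT tight; rewrite /tail_u mulmxBr.
  have [kN|Nk] := ltnP k N.-1; first by rewrite mxE [X in _ + X]mxE w_Fu ?subrr.
  rewrite (w_out Nk).2 mulmx0 subr0; apply: dFu => //.
  by rewrite /window -addSnnS.
Qed.

Lemma slope_head_tail :
  slope T1.+1 (window x t) (window u t) dx du =
  slope N (window x t) (window u t) head_x head_u +
  slope T1 (window x t.+1) (window u t.+1) tail_x tail_u.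
Proof.
have [dx_0 _ _ _ _] := dir.
rewrite /fh_slope -(@sum_ord_widen0 _ (fun k =>
  bform Q (window x t k) (head_x k) + bform Rc (window u t k) (head_u k)) N T1.+1); last 2 first.
- exact: leqW NT1.
- case=> [|k] /andP[Nk _]; first by rewrite leqNgt N_gt0 in Nk.
  by rewrite /= (w_out _).1 ?(w_out _).2 ?bform0r ?addr0 // -ltnS prednK.
rewrite !big_ord_recl /= dx_0 -[RHS]addrA -big_split /=; congr (_ + _).
apply: eq_bigr => k _; rewrite /tail_x /tail_u /window /bump /= add1n add0n addSnnS.
by rewrite !bformBr; ring.
Qed.

End Splitting.

Hypothesis slope_ge0_short : forall t T, (T <= N)%N -> forall dx du,
  direction T (window x t) (window u t) dx du ->
  0 <= slope T (window x t) (window u t) dx du.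
Hypothesis licq_shifted : forall t, (0 < t)%N ->
  licq A B Fx bx Fu bu N.-1 (window x t) (window u t).

Lemma slope_ge0_step t T1 dx du : (N <= T1)%N ->
  direction T1.+1 (window x t) (window u t) dx du ->
  exists2 dxu : (nat -> 'cV[R]_n) * (nat -> 'cV[R]_d),
    direction T1 (window x t.+1) (window u t.+1) dxu.1 dxu.2 &
    slope T1 (window x t.+1) (window u t.+1) dxu.1 dxu.2 <=
    slope T1.+1 (window x t) (window u t) dx du.
Proof.
move=> NT1 dir.
have [wx [wu [w_0 w_dyn w_out w_Fx w_Fu]]] := licq_direction (dx 1%N)
  (fun k => Fx *m dx k.+1) (fun k => Fu *m du k.+1) (licq_shifted (ltn0Sn t)).
exists (tail_x dx wx, tail_u du wu); first exact: tail_direction.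
rewrite (slope_head_tail NT1 dir w_out).
have := slope_ge0_short (leqnn N) (head_direction NT1 dir w_0 w_dyn w_out w_Fx w_Fu).
lra.
Qed.

Lemma window_slope_ge0 t T dx du : direction T (window x t) (window u t) dx du ->
  0 <= slope T (window x t) (window u t) dx du.
Proof.
elim/ltn_ind: T t dx du => T IH t dx du dir.
have [TN|NT] := leqP T N; first exact: slope_ge0_short.
case: T IH dir NT => [//|T1] IH dir NT.
have [dxu dir2 le2] := slope_ge0_step (NT : N <= T1)%N dir.
exact: le_trans (IH T1 (ltnSn T1) _ _ _ dir2) le2.
Qed.

End WindowDecomposition.

(** * The LMPC closed loop at its fixed point *)

Definition shift_weights (R : realType) (gam : nat -> nat -> R) (i k : nat) : R :=
  if k is k'.+1 then gam i k' else 0.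

Definition shift_with (V : Type) (s : nat -> V) (m : nat) (v : V) (k : nat) : V :=
  if k == m then v else s k.+1.

Definition splice (V : Type) (T : nat) (s s' : nat -> V) (k : nat) : V :=
  if (k < T)%N then s k else s' k.

Section ClosedLoop.
Variables (R : realType) (n d px pu : nat).
Variables (A : 'M[R]_n) (B : 'M[R]_(n, d)).
Variables (Fx : 'M[R]_(px, n)) (bx : 'cV[R]_px) (Fu : 'M[R]_(pu, d)) (bu : 'cV[R]_pu).
Variables (Q : 'M[R]_n) (Rc : 'M[R]_d) (N : nat) (xS : 'cV[R]_n).
Variables (X : nat -> nat -> 'cV[R]_n) (U : nat -> nat -> 'cV[R]_d) (c : nat).
Hypotheses (Q_psd : psd Q) (Rc_pd : pd Rc) (N_gt0 : (0 < N)%N).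
Hypothesis X_0 : forall j, X j 0%N = xS.
Hypothesis X_dyn : forall j t, X j t.+1 = A *m X j t + B *m U j t.
Hypothesis feasible0 : forall t, inPoly Fx bx (X 0%N t) /\ inPoly Fu bu (U 0%N t).
Hypothesis costtogo0_fin : (costtogo Q Rc X U 0 0 < +oo)%E.
Hypothesis closed_loop : forall j t, (0 < j)%N ->
  exists xp up, lmpc_optimal A B Fx bx Fu bu Q Rc N X U j.-1 (X j t) xp up /\ U j t = up 0%N.
Hypothesis fixed_point : forall j, (c <= j)%N -> X j = X c /\ U j = U c.

Local Notation h := (stage_cost Q Rc).
Local Notation J := (costtogo Q Rc X U).
Local Notation V := (Vfun Q Rc X U).
Local Notation plan_feasible := (lmpc_feasible A B Fx bx Fu bu N X c).
Local Notation plan_cost := (lmpc_cost Q Rc N X U c).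

Let h_ge0 := stage_cost_ge0 Q_psd Rc_pd.

Lemma costtogo_ge0 i k : (0 <= J i k)%E.
Proof. by apply: nneseries_ge0 => m _ _; rewrite lee_fin h_ge0. Qed.

Lemma costtogo_split i k K : J i k =
  ((\sum_(s < K) h (X i (k + s)%N) (U i (k + s)%N))%:E + J i (k + K))%E.
Proof.
rewrite /costtogo (@nneseries_split _ _ k K); last by move=> m _; rewrite lee_fin h_ge0.
by rewrite big_nat_shift sumEFin.
Qed.

Lemma costtogo_step i k : J i k = ((h (X i k) (U i k))%:E + J i k.+1)%E.
Proof. by rewrite (costtogo_split i k 1) big_ord1 !addn0 addn1. Qed.

Lemma costtogo_le i k (y : \bar R) :
  (forall K, ((\sum_(s < K) h (X i (k + s)%N) (U i (k + s)%N))%:E <= y)%E) ->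
  (J i k <= y)%E.
Proof.
move=> partial_le; apply: lime_le.
  by apply: is_cvg_ereal_nneg_natsum => m _; rewrite lee_fin h_ge0.
exists k => // K /= kK; rewrite -(subnKC kK) big_nat_shift sumEFin.
exact: partial_le.
Qed.

Lemma Vfun_ge0 j x : (0 <= V j x)%E.
Proof.
apply: le_ereal_inf_tmp => _ [M [gam [[gam_ge0 _ _] ->]]].
by apply: sume_ge0 => i _; apply: sume_ge0 => k _; rewrite mule_ge0 ?lee_fin ?costtogo_ge0.
Qed.

Lemma Vfun_le j x M gam : conv_weights X j x M gam ->
  (V j x <= \sum_(i < j.+1) \sum_(k < M) (gam i k)%:E * J i k)%E.
Proof. by move=> cw; apply: ereal_inf_lbound; exists M, gam. Qed.

Lemma le_add_Vfun (a : R) (y : \bar R) j x :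
  (forall M gam, conv_weights X j x M gam ->
     y <= a%:E + \sum_(i < j.+1) \sum_(k < M) (gam i k)%:E * J i k)%E ->
  (y <= a%:E + V j x)%E.
Proof.
move=> le_y; rewrite -leeBlDl //; apply: le_ereal_inf_tmp => _ [M [gam [cw ->]]].
by rewrite leeBlDl // le_y.
Qed.

Definition delta_weights (i0 k0 i k : nat) : R :=
  if (i == i0) && (k == k0) then 1 else 0.

Lemma conv_weights_delta j i0 k0 : (i0 <= j)%N ->
  conv_weights X j (X i0 k0) k0.+1 (delta_weights i0 k0).
Proof.
move=> i0j; split.
- by move=> i k; rewrite /delta_weights; case: ifP.
- by rewrite (big_delta2 _ (fun _ _ => 1)).
- rewrite /delta_weights.
  under eq_bigr => i _ do under eq_bigr => k _ do
    rewrite (fun_if (fun r => r *: X i k)) scale1r scale0r.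
  by rewrite (big_delta2 _ X).
Qed.

Lemma inCS_stored j i k : (i <= j)%N -> inCS X j (X i k).
Proof. by move=> ij; exists k.+1, (delta_weights i k); apply: conv_weights_delta. Qed.

Lemma Vfun_le_costtogo j i k : (i <= j)%N -> (V j (X i k) <= J i k)%E.
Proof.
move=> ij; apply: le_trans (Vfun_le (conv_weights_delta k ij)) _.
rewrite /delta_weights.
under eq_bigr => i' _ do under eq_bigr => k' _ do
  rewrite (fun_if (fun r => r%:E * J i' k')%E) mul1e mul0e.
by rewrite (big_delta2 _ J).
Qed.

Lemma stage_cost_conv_le j x M gam : conv_weights X j x M gam ->
  h x (\sum_(i < j.+1) \sum_(k < M) gam i k *: U i k) <=
  \sum_(i < j.+1) \sum_(k < M) gam i k * h (X i k) (U i k).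
Proof.
move=> [gam_ge0 gam_sum1 <-]; rewrite !pair_big /= in gam_sum1 *.
have c_ge0 (ik : 'I_j.+1 * 'I_M) : 0 <= gam ik.1 ik.2 by [].
have := bform_jensen Q_psd.1 Q_psd.2 (fun ik : 'I_j.+1 * 'I_M => X ik.1 ik.2)
  c_ge0 gam_sum1.
have := bform_jensen Rc_pd.1 (bform_Rc_ge0 Rc_pd) (fun ik : 'I_j.+1 * 'I_M => U ik.1 ik.2)
  c_ge0 gam_sum1.
suff -> : \sum_(ik : 'I_j.+1 * 'I_M) gam ik.1 ik.2 * h (X ik.1 ik.2) (U ik.1 ik.2) =
    \sum_(ik : 'I_j.+1 * 'I_M) gam ik.1 ik.2 * bform Q (X ik.1 ik.2) (X ik.1 ik.2) +
    \sum_(ik : 'I_j.+1 * 'I_M) gam ik.1 ik.2 * bform Rc (U ik.1 ik.2) (U ik.1 ik.2).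
  by rewrite stage_costE; lra.
by rewrite -big_split; apply: eq_bigr => ik _; rewrite stage_costE mulrDr.
Qed.

Lemma stored_feasible i k : inPoly Fx bx (X i k) /\ inPoly Fu bu (U i k).
Proof.
case: i => [|i]; first exact: feasible0.
have [xp [up [[[xp_0 xp_k _] _] ->]]] := closed_loop k (ltn0Sn i).
by have [_ xF uF] := xp_k 0%N N_gt0; rewrite -xp_0.
Qed.

Lemma lmpc_at_fixed_point t : exists xp up,
  lmpc_optimal A B Fx bx Fu bu Q Rc N X U c (X c t) xp up /\ U c t = up 0%N.
Proof.
have [xp [up opt]] := closed_loop t (ltn0Sn c).
by have [Xc Uc] := fixed_point (leqnSn c); rewrite Xc Uc in opt; exists xp, up.
Qed.

Definition lmpc_value t : \bar R := ereal_inf [set v | exists xp up,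
  plan_feasible (X c t) xp up /\ v = plan_cost xp up].

Lemma lmpc_value_le t xp up : plan_feasible (X c t) xp up ->
  (lmpc_value t <= plan_cost xp up)%E.
Proof. by move=> feas; apply: ereal_inf_lbound; exists xp, up. Qed.

Lemma lmpc_optimal_cost t xp up :
  lmpc_optimal A B Fx bx Fu bu Q Rc N X U c (X c t) xp up -> plan_cost xp up = lmpc_value t.
Proof.
move=> [feas opt]; apply/eqP; rewrite eq_le lmpc_value_le // andbT.
by apply: le_ereal_inf_tmp => _ [xp' [up' [feas' ->]]]; apply: opt.
Qed.

Lemma lmpc_value_ge0 t : (0 <= lmpc_value t)%E.
Proof.
have [xp [up [opt _]]] := lmpc_at_fixed_point t; rewrite -(lmpc_optimal_cost opt).
by rewrite adde_ge0 ?Vfun_ge0 // lee_fin sumr_ge0.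
Qed.

Definition mixed_input M (gam : nat -> nat -> R) : 'cV[R]_d :=
  \sum_(i < c.+1) \sum_(k < M) gam i k *: U i k.

Lemma conv_weights_successor x M gam : conv_weights X c x M gam ->
  [/\ inPoly Fx bx x, inPoly Fu bu (mixed_input M gam) &
   conv_weights X c (A *m x + B *m mixed_input M gam) M.+1 (shift_weights gam)].
Proof.
move=> [gam_ge0 gam_sum1 gam_x]; move: (gam_sum1); rewrite pair_big => gam_sum1_pair.
split.
- rewrite -gam_x pair_big /=.
  apply: (inPoly_conv (c := fun ik : 'I_c.+1 * 'I_M => gam ik.1 ik.2)) => // ik.
  exact: (stored_feasible _ _).1.
- rewrite /mixed_input pair_big /=.
  apply: (inPoly_conv (c := fun ik : 'I_c.+1 * 'I_M => gam ik.1 ik.2)) => // ik.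
  exact: (stored_feasible _ _).2.
split.
- by move=> i [|k] /=.
- by rewrite -gam_sum1; apply: eq_bigr => i _; rewrite big_ord_recl add0r.
rewrite -gam_x !mulmx_sumr -big_split; apply: eq_bigr => i _.
rewrite big_ord_recl scale0r add0r !mulmx_sumr -big_split; apply: eq_bigr => k _.
by rewrite /= X_dyn scalerDr -!scalemxAr add0n.
Qed.

Lemma terminal_step_le x M gam : conv_weights X c x M gam ->
  ((h x (mixed_input M gam))%:E + V c (A *m x + B *m mixed_input M gam) <=
   \sum_(i < c.+1) \sum_(k < M) (gam i k)%:E * J i k)%E.
Proof.
move=> cw; have [_ _ cw_next] := conv_weights_successor cw.
have [gam_ge0 _ _] := cw.
apply: le_trans (leeD2l _ (Vfun_le cw_next)) _.
have -> : (\sum_(i < c.+1) \sum_(k < M) (gam i k)%:E * J i k =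
    (\sum_(i < c.+1) \sum_(k < M) gam i k * h (X i k) (U i k))%:E +
    \sum_(i < c.+1) \sum_(k < M) (gam i k)%:E * J i k.+1)%E.
  rewrite -sumEFin -big_split /=; apply: eq_bigr => i _.
  rewrite -sumEFin -big_split /=; apply: eq_bigr => k _.
  by rewrite costtogo_step ge0_muleDr ?lee_fin ?costtogo_ge0 // EFinM.
have -> : (\sum_(i < c.+1) \sum_(k < M.+1) (shift_weights gam i k)%:E * J i k =
    \sum_(i < c.+1) \sum_(k < M) (gam i k)%:E * J i k.+1)%E.
  by apply: eq_bigr => i _; rewrite big_ord_recl /= mul0e add0e.
by apply: leeD2r; rewrite lee_fin; apply: stage_cost_conv_le cw.
Qed.

Lemma lmpc_feasible_shift x0 xp up v : plan_feasible x0 xp up ->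
  inPoly Fx bx (xp N) -> inPoly Fu bu v -> inCS X c (A *m xp N + B *m v) ->
  plan_feasible (xp 1%N) (shift_with xp N (A *m xp N + B *m v)) (shift_with up N.-1 v).
Proof.
move=> [_ xp_k _] xN_F vF vCS; split.
- by rewrite /shift_with eq_sym gtn_eqF.
- move=> k kN; rewrite /shift_with (ltn_eqF kN).
  have [->|kN1] := eqVneq k N.-1; first by rewrite prednK // eqxx.
  have k1N : (k.+1 < N)%N by rewrite -[N](prednK N_gt0) ltnS ltn_neqAle kN1 -ltnS prednK.
  by rewrite (ltn_eqF k1N); apply: xp_k.
- by rewrite /shift_with eqxx.
Qed.

Lemma lmpc_cost_shift xp up v :
  plan_cost (shift_with xp N (A *m xp N + B *m v)) (shift_with up N.-1 v) =
  ((\sum_(k < N.-1) h (xp k.+1) (up k.+1) + h (xp N) v)%:E + V c (A *m xp N + B *m v))%E.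
Proof.
rewrite /lmpc_cost {3}/shift_with eqxx (sum_ord_recr_pred (fun k =>
  h (shift_with xp N (A *m xp N + B *m v) k) (shift_with up N.-1 v k)) N_gt0).
have predN_lt : (N.-1 < N)%N by rewrite ltn_predL.
congr ((_ + _)%:E + _)%E; last by rewrite /shift_with eqxx (ltn_eqF predN_lt) prednK.
apply: eq_bigr => k _; have kN1 := ltn_ord k.
by rewrite /shift_with !ltn_eqF // (ltn_trans kN1 predN_lt).
Qed.

Lemma lmpc_value_decrease t :
  ((h (X c t) (U c t))%:E + lmpc_value t.+1 <= lmpc_value t)%E.
Proof.
have [xp [up [[feas opt] u_eq]]] := lmpc_at_fixed_point t.
rewrite -(lmpc_optimal_cost (conj feas opt)) /lmpc_cost.
have [xp_0 xp_k _] := feas.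
have xp_1 : xp 1%N = X c t.+1.
  by have [-> _ _] := xp_k 0%N N_gt0; rewrite xp_0 -u_eq X_dyn.
rewrite (sum_ord_recl_pred (fun k => h (xp k) (up k)) N_gt0) xp_0 -u_eq.
rewrite [in X in (_ <= X)%E]EFinD -addeA leeD2lE //.
apply: le_add_Vfun => M gam cw.
have [xN_F uN_F cw_next] := conv_weights_successor cw.
have next_CS : inCS X c (A *m xp N + B *m mixed_input M gam) by exists M.+1, (shift_weights gam).
have feas_next := lmpc_feasible_shift feas xN_F uN_F next_CS; rewrite xp_1 in feas_next.
apply: le_trans (lmpc_value_le feas_next) _.
by rewrite lmpc_cost_shift EFinD -addeA leeD2lE //; apply: terminal_step_le.
Qed.

Lemma lmpc_value_telescope K t :
  ((\sum_(s < K) h (X c (t + s)%N) (U c (t + s)%N))%:E + lmpc_value (t + K) <=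
   lmpc_value t)%E.
Proof.
elim: K t => [|K IH] t; first by rewrite big_ord0 add0e addn0.
rewrite big_ord_recr /= EFinD -addeA; apply: le_trans (IH t).
by rewrite leeD2lE // addnS; apply: lmpc_value_decrease.
Qed.

Lemma costtogo_le_value t : (J c t <= lmpc_value t)%E.
Proof.
apply: costtogo_le => K; apply: le_trans (lmpc_value_telescope K t).
by rewrite leeDl ?lmpc_value_ge0.
Qed.

Lemma lmpc_value_lt_pinfty t : (lmpc_value t < +oo)%E.
Proof.
have feas0 : plan_feasible (X c 0) (X 0%N) (U 0%N).
  split; [by rewrite !X_0 | move=> k _ | exact: inCS_stored].
  by have [xF uF] := feasible0 k; split.
apply: le_lt_trans costtogo0_fin; apply: (@le_trans _ _ (lmpc_value 0)).
  have := lmpc_value_telescope t 0; rewrite add0n; apply: le_trans.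
  by rewrite leeDr // lee_fin sumr_ge0.
apply: le_trans (lmpc_value_le feas0) _; rewrite (costtogo_split 0 0 N) leeD2lE //.
exact: Vfun_le_costtogo.
Qed.

Lemma window_fh_feasible t T :
  fh_feasible A B Fx bx Fu bu T (X c t) (X c (t + T)) (window (X c) t) (window (U c) t).
Proof.
split=> //; first by rewrite /window addn0.
move=> k _; have [xF uF] := stored_feasible c (t + k); split=> //.
by rewrite /window addnS X_dyn.
Qed.

Lemma splice_plan_feasible t T x' u' : (T <= N)%N ->
  fh_feasible A B Fx bx Fu bu T (X c t) (X c (t + T)) x' u' ->
  plan_feasible (X c t) (splice T x' (window (X c) t)) (splice T u' (window (U c) t)).
Proof.
move=> TN [x'_0 x'_k x'_T]; split.
- by rewrite /splice; case: ifP; rewrite // /window addn0.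
- move=> k kN; rewrite /splice; have [kT|Tk] := ltnP k T.
    have [x'_next xF uF] := x'_k k kT; split=> //.
    have [//|Tk1] := ltnP k.+1 T; have ET : k.+1 = T by apply/eqP; rewrite eqn_leq kT.
    by rewrite /window -x'_next ET x'_T.
  rewrite ltnNge (leqW Tk) /=; have [xF uF] := stored_feasible c (t + k); split=> //.
  by rewrite /window addnS X_dyn.
- by rewrite /splice ltnNge TN /=; apply: inCS_stored.
Qed.

Lemma window_fh_optimal t T : (T <= N)%N ->
  fh_optimal A B Fx bx Fu bu Q Rc T (X c t) (X c (t + T)) (window (X c) t) (window (U c) t).
Proof.
move=> TN; split=> [|x' u' feas']; first exact: window_fh_feasible.
pose cost_along (y : nat -> 'cV[R]_n) (v : nat -> 'cV[R]_d) := \sum_(k < N) h (y k) (v k).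
pose xe := splice T x' (window (X c) t); pose ue := splice T u' (window (U c) t).
have VN_fin : V c (X c (t + N)) \is a fin_num.
  rewrite ge0_fin_numE ?Vfun_ge0 //; apply: le_lt_trans (lmpc_value_lt_pinfty (t + N)).
  exact: le_trans (Vfun_le_costtogo _ (leqnn c)) (costtogo_le_value _).
have along_le : cost_along (window (X c) t) (window (U c) t) <= cost_along xe ue.
  rewrite -lee_fin -(leeD2rE _ _ VN_fin); apply: (@le_trans _ _ (lmpc_value t)).
    apply: le_trans (lmpc_value_telescope N t); rewrite leeD2lE //.
    exact: le_trans (Vfun_le_costtogo _ (leqnn c)) (costtogo_le_value _).
  have xe_N : xe N = X c (t + N) by rewrite /xe /splice ltnNge TN.
  by have := lmpc_value_le (splice_plan_feasible TN feas'); rewrite /lmpc_cost -/xe -/ue xe_N.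
suff : cost_along xe ue - cost_along (window (X c) t) (window (U c) t) =
    fh_cost Q Rc T x' u' - fh_cost Q Rc T (window (X c) t) (window (U c) t) by lra.
rewrite /fh_cost -!sumrB.
rewrite (sum_ord_widen0 (f := fun k => h (xe k) (ue k) - h (X c (t + k)) (U c (t + k))) TN).
  by apply: eq_bigr => k _; rewrite /xe /ue /splice ltn_ord.
by move=> k /andP[Tk _]; rewrite /xe /ue /splice ltnNge Tk subrr.
Qed.

End ClosedLoop.

Unset Implicit Arguments.

Theorem theorem1 (R : realType) (n d px pu : nat)
  (A : 'M[R]_n) (B : 'M[R]_(n, d))
  (Fx : 'M[R]_(px, n)) (bx : 'cV[R]_px) (Fu : 'M[R]_(pu, d)) (bu : 'cV[R]_pu)
  (Q : 'M[R]_n) (Rc : 'M[R]_d) (N : nat) (xS : 'cV[R]_n)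
  (X : nat -> nat -> 'cV[R]_n) (U : nat -> nat -> 'cV[R]_d) (c : nat) :
  origin_interior Fx bx -> origin_interior Fu bu ->
  psd Q -> pd Rc -> (0 < N)%N ->
  (* trajectories of every iteration start at xS and follow the dynamics *)
  (forall j, X j 0%N = xS) ->
  (forall j t, X j t.+1 = A *m X j t + B *m U j t) ->
  (* initial feasible trajectory (iteration 0) *)
  (forall t, inPoly Fx bx (X 0%N t) /\ inPoly Fu bu (U 0%N t)) ->
  (forall i, (fun t => X 0%N t i 0) @ \oo --> (0 : R)) ->
  (forall i, (fun t => U 0%N t i 0) @ \oo --> (0 : R)) ->
  (costtogo Q Rc X U 0 0 < +oo)%E ->
  (* iterations j >= 1 are the closed loop under the LMPC policy *)
  (forall j t, (0 < j)%N ->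
     exists xp up, lmpc_optimal A B Fx bx Fu bu Q Rc N X U j.-1 (X j t) xp up
                   /\ U j t = up 0%N) ->
  (* convergence to a fixed point after c iterations *)
  (forall j, (c <= j)%N -> X j = X c /\ U j = U c) ->
  (* LICQ for T = N-1, all t >= 1 *)
  (forall t, (1 <= t)%N -> forall xo uo,
     fh_optimal A B Fx bx Fu bu Q Rc N.-1 (X c t) (X c (t + N.-1)%N) xo uo ->
     licq A B Fx bx Fu bu N.-1 xo uo) ->
  forall t T, (0 < T)%N ->
    fh_optimizer A B Fx bx Fu bu Q Rc T (X c t) (X c (t + T)%N)
      (fun k => X c (t + k)%N) (fun k => U c (t + k)%N).
Proof.
move=> _ _ Q_psd Rc_pd N_gt0 X_0 X_dyn feasible0 _ _ cost0_fin closed_loop fixed_point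
  licq_opt t T _.
have window_opt := window_fh_optimal Q_psd Rc_pd N_gt0 X_0 X_dyn feasible0 cost0_fin
  closed_loop fixed_point.
apply: (fh_optimizer_of_slope_ge0 Q_psd Rc_pd
  (window_fh_feasible c N_gt0 X_dyn feasible0 closed_loop t T)) => dx du.
apply: (window_slope_ge0 N_gt0).
- move=> t' T' T'N dx' du'; exact: (fh_optimal_slope_ge0 Q_psd Rc_pd (window_opt _ _ T'N)).
- move=> t' t'_gt0; exact: licq_opt t' t'_gt0 _ _ (window_opt t' _ (leq_pred N)).
Qed.
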